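(* Let $(X_\alpha,\tau_\alpha)_{\alpha\in\Omega}$ be a family of topological spaces and let $X=\sum_{\alpha\in\Omega}X_\alpha$ be their topological sum (disjoint union). Then $X$ is a kd-space if and only if each $X_\alpha$ is a kd-space.
   Context: A space is a kd-space if every compact subset is $\delta$-closed. In a space $Y$, a set $U$ is regular open if $U=\mathrm{Int}(\mathrm{Cl}(U))$; a point $x$ is a $\delta$-cluster point of $B\subseteq Y$ if $B\cap U\neq\emptyset$ for every regular open $U\ni x$; $B$ is $\delta$-closed if it contains all its $\delta$-cluster points. *)

From HB Require Import structures.
From mathcomp Require Import all_boot all_order all_algebra.
From mathcomp Require Import all_classical all_reals all_analysis.
Set Implicit Arguments. Unset Strict Implicit. Unset Printing Implicit Defensive.
Local Open Scope classical_set_scope.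

Definition delta_cluster (Y : topologicalType) (B : set Y) (x : Y) : Prop :=
  forall U : set Y, regopen U -> U x -> B `&` U !=set0.

Definition delta_closed (Y : topologicalType) (B : set Y) : Prop :=
  forall x : Y, delta_cluster B x -> B x.

Definition kd_space (Y : topologicalType) : Prop :=
  forall K : set Y, compact K -> delta_closed K.

From HB Require Import structures.
From mathcomp Require Import all_boot all_order all_algebra.
From mathcomp Require Import all_classical all_reals all_analysis.
Local Open Scope classical_set_scope.

(* Each summand X i sits in the sum as a clopen subspace via existT i, so this
   embedding commutes with closure and interior; hence it preserves and
   reflects delta-cluster points.  Compact sets of X i map to compact sets of
   the sum, and the trace on X i of a compact set of the sum is compact
   (because the summand is closed); with injectivity of existT i this
   transfers delta-closedness of compact sets in both directions. *)

Lemma delta_clusterP (Y : topologicalType) (B : set Y) (x : Y) :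
  delta_cluster B x <-> forall V, open V -> V x -> B `&` (closure V)° !=set0.
Proof.
split=> [xB V oV Vx | xB U rU Ux].
- apply: xB; first exact: interior_closure_idem.
  by apply: interiorS (@subset_closure _ V) _ _; rewrite (interior_id V).1.
- by rewrite -rU; apply: xB Ux; rewrite -rU; exact: open_interior.
Qed.

Section sigT_embedding.
Context {I : choiceType} {X : I -> topologicalType} (i : I).
Local Notation emb := (existT X i).

Lemma existT_inj : injective emb.
Proof. exact: existT_inj2. Qed.

Lemma preimage_existT_image (A : set (X i)) : emb @^-1` (emb @` A) = A.
Proof. by apply/funext => x; exact: image_inj existT_inj. Qed.

Lemma interior_existT_image (A : set (X i)) : (emb @` A)° = emb @` A°.
Proof.
apply/seteqP; split=> [q Aq | _ [x Ax <-]]; last exact: existT_nbhs.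
have [x _ qx] := interior_subset Aq; rewrite -qx in Aq *.
by apply: imageP; rewrite /interior -[A]preimage_existT_image.
Qed.

Lemma closure_existT_image (A : set (X i)) :
  closure (emb @` A) = emb @` closure A.
Proof.
apply/seteqP; split=> [[j y] Ay | _ [x Ax <-] N Nx]; last first.
  by have [a [Aa Na]] := Ax _ Nx; exists (emb a).
(* the fibre over j is a neighbourhood of (j, y), so it meets fibre i *)
have [_ [[a0 _ <-] [b0 _ eq_ab]]] :=
  Ay _ (existT_nbhs _ _ _ (filterT : nbhs y setT)).
have {eq_ab} ij := existT_inj1 eq_ab; subst j; apply: imageP => N Ny.
have [_ [[a Aa <-] [b Nb /existT_inj ab]]] := Ay _ (existT_nbhs _ _ _ Ny).
by exists a; split; last rewrite -ab.
Qed.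

Lemma compact_existT_preimage (K : set {i & X i}) :
  compact K -> compact (emb @^-1` K).
Proof.
move=> cK F PF FK; have [q [Kq Fq]] := cK (emb @ F) _ FK.
have FA A : F A -> closure (emb @` A) q.
  by move=> FA B; apply: Fq; exact: filterS (@preimage_image _ _ _ A) FA.
have [x _ qx] : (emb @` closure setT) q.
  by rewrite -closure_existT_image; exact: FA filterT.
rewrite -qx in Kq FA; exists x; split => //; rewrite clusterE => A /FA.
by rewrite closure_existT_image image_inj //; exact: existT_inj.
Qed.

Lemma delta_cluster_existT (B : set {i & X i}) (x : X i) :
  delta_cluster B (emb x) <-> delta_cluster (emb @^-1` B) x.
Proof.
rewrite !delta_clusterP; split=> [xB V oV Vx | xB U oU Ux].
- have [q [Bq]] := xB _ (existT_open_map _ _ oV) (imageP _ Vx).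
  rewrite closure_existT_image interior_existT_image => -[y Vy yq].
  by exists y; split; rewrite //= yq.
- have [y [By Vy]] := xB _ ((sigT_openP U).1 oU i) Ux.
  exists (emb y); split => //.
  apply: interiorS (closureS (@image_preimage_subset _ _ emb U)) _ _.
  by rewrite closure_existT_image interior_existT_image; exact: imageP.
Qed.

End sigT_embedding.

Theorem mainTheorem6 (I : choiceType) (X : I -> topologicalType) :
  kd_space {i & X i} <-> (forall i : I, kd_space (X i)).
Proof.
split=> [kdX i K cK x xK | kdX K cK [i x] xK].
- have cK' : compact (existT X i @` K).
    apply: continuous_compact cK.
    exact/continuous_subspaceT/existT_continuous.
  have : delta_cluster (existT X i @` K) (existT X i x).
    by apply/delta_cluster_existT; rewrite preimage_existT_image.
  by move/(kdX _ cK'); rewrite image_inj //; exact: existT_inj.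
- have {}xK := (delta_cluster_existT _ _ _).1 xK.
  exact: kdX i _ (compact_existT_preimage _ _ cK) _ xK.
Qed.
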